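(* Let $T=K[x_1,\ldots,x_n,y_1,\ldots,y_m]$, let $\mathfrak m=(x_1,\ldots,x_n)$ and let $I\subset T$ be a monomial ideal. The following are equivalent: (a) $(I:x_1)\cap(\mathfrak mT+I)=I$; (b) whenever $x_1$ divides $u\in G(I)$, then $u=x_1y^b$ for some $b\in\mathbb{Z}_{\ge0}^m$, and $x_jy^b\in I$ for all $j=1,\ldots,n$.
   Context: $G(I)$ denotes the unique minimal set of monomial generators of the monomial ideal $I$, and $y^b=y_1^{b_1}\cdots y_m^{b_m}$ (a monomial in the $y$-variables only). *)

From HB Require Import structures.
From mathcomp Require Import all_boot all_order all_algebra.
Set Implicit Arguments. Unset Strict Implicit. Unset Printing Implicit Defensive.
Import GRing.Theory.
Local Open Scope ring_scope.

(* The polynomial ring R[z_0, ..., z_(N-1)] as the iterated univariate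
   polynomial ring R[z_0][z_1]...[z_(N-1)]. *)
Fixpoint mpoly (R : comNzRingType) (N : nat) : comNzRingType :=
  if N is N'.+1 then ({poly mpoly R N'} : comNzRingType) else R.

(* the variable z_i (i < N); z_i = 0 for i >= N, never used *)
Fixpoint mvar (R : comNzRingType) (N : nat) (i : nat) {struct N} : mpoly R N :=
  match N return mpoly R N with
  | 0 => 0
  | N'.+1 => if i == N' then 'X else (mvar R N' i)%:P
  end.

Definition mmon (R : comNzRingType) (N : nat) (e : 'I_N -> nat) : mpoly R N :=
  \prod_(i < N) mvar R N i ^+ e i.

Definition is_monomial (R : comNzRingType) (N : nat) (u : mpoly R N) : Prop :=
  exists e : 'I_N -> nat, u = @mmon R N e.

Definition rdvd (T : comNzRingType) (a b : T) : Prop := exists h : T, b = h * a.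

Definition ideal_gen (T : comNzRingType) (S : T -> Prop) (f : T) : Prop :=
  exists l : seq (T * T), (forall p, p \in l -> S p.2) /\
    f = \sum_(p <- l) p.1 * p.2.

Definition monomial_ideal (R : comNzRingType) (N : nat) (I : mpoly R N -> Prop) :=
  exists S : mpoly R N -> Prop, (forall u, S u -> is_monomial u) /\
    (forall f, I f <-> ideal_gen S f).

(* u is in G(I), the unique minimal set of monomial generators of the monomial
   ideal I: u is a monomial of I not divisible by any other monomial of I. *)
Definition in_mingens (R : comNzRingType) (N : nat) (I : mpoly R N -> Prop)
  (u : mpoly R N) : Prop :=
  is_monomial u /\ I u /\
  forall v, is_monomial v -> I v -> rdvd v u -> v = u.

(* In T = K[x_1..x_n, y_1..y_m] (with N = n + m variables):
   x_(j+1) = z_j for j < n,   y_(k+1) = z_(n+k) for k < m. *)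
Definition xv (R : comNzRingType) (n m : nat) (j : 'I_n) : mpoly R (n + m) :=
  mvar R (n + m) (lshift m j).
Definition yv (R : comNzRingType) (n m : nat) (k : 'I_m) : mpoly R (n + m) :=
  mvar R (n + m) (rshift n k).
Definition ymon (R : comNzRingType) (n m : nat) (b : 'I_m -> nat) : mpoly R (n + m) :=
  \prod_(k < m) @yv R n m k ^+ b k.

From HB Require Import structures.
From mathcomp Require Import all_boot all_order all_algebra.
From Stdlib Require Import Classical.
Set Implicit Arguments. Unset Strict Implicit.
Import GRing.Theory.
Local Open Scope ring_scope.

(* A polynomial lies in a monomial ideal iff each monomial of its support does,
   and a monomial lies in it iff it is divisible by a minimal generator.

   (a) => (b): write u = x_1 v.  If some x_j divides v, then v is in mT and
   x_1 v = u is in I, so v is in I by (a), contradicting the minimality of u.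
   Hence v = y^b, and x_j y^b is in mT with x_1 x_j y^b = x_j u in I.

   (b) => (a): let x_1 f be in I and f = a + g with a in mT, g in I, and let
   z^e be a monomial of f.  Some minimal generator w of I divides x_1 z^e.  If
   w divides z^e we are done; otherwise x_1 divides w, so w = x_1 y^b by (b).
   Unless z^e is a monomial of g, it is a monomial of a, hence divisible by
   some x_j, and then by x_j y^b, which lies in I. *)

Definition exp_le N (d e : 'I_N -> nat) := [forall i, d i <= e i]%N.

Definition exp_delta N (i0 : 'I_N) : 'I_N -> nat := fun i => (i == i0 : nat).

Lemma exp_le_trans N (a b c : 'I_N -> nat) : exp_le a b -> exp_le b c -> exp_le a c.
Proof.
move=> /forallP le_ab /forallP le_bc; apply/forallP => i.
exact: leq_trans (le_ab i) (le_bc i).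
Qed.

Lemma forall_ord_recr N (P : 'I_N.+1 -> bool) :
  [forall i, P i] = [forall i : 'I_N, P (widen_ord (leqnSn N) i)] && P ord_max.
Proof.
apply/forallP/andP => [H|[/forallP H1 H2] i].
  by split; [apply/forallP => i; exact: H|exact: H].
case: (unliftP ord_max i) => [j ->|->] //.
have -> : lift ord_max j = widen_ord (leqnSn N) j by apply: val_inj; exact: lift_max.
exact: H1.
Qed.

Lemma exp_le_delta N (i0 : 'I_N) (d : 'I_N -> nat) :
  exp_le (exp_delta i0) d = (0 < d i0)%N.
Proof.
apply/forallP/idP => [/(_ i0)|d0 i]; first by rewrite /exp_delta eqxx.
by rewrite /exp_delta; case: eqVneq => [->|].
Qed.

Lemma exp_le_add_delta N (i0 : 'I_N) (d e : 'I_N -> nat) :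
  exp_le d (fun i => e i + exp_delta i0 i)%N -> ~~ exp_le d e -> (0 < d i0)%N.
Proof.
move=> /forallP le_d; rewrite negb_forall => /existsP [i]; rewrite -ltnNge => lt_ei.
move: (le_d i) lt_ei; rewrite /exp_delta; case: eqVneq => [->|_] /=.
  by move=> _; exact: leq_ltn_trans (leq0n _).
by rewrite addn0 leqNgt => /negbTE->.
Qed.

Lemma sum_exp_lt N (d e : 'I_N -> nat) :
  exp_le d e -> ~ d =1 e -> (\sum_i d i < \sum_i e i)%N.
Proof.
move=> /forallP le_de ne_de.
have [i lt_i] : exists i, (d i < e i)%N.
  apply: NNPP => no_lt; apply: ne_de => i; apply/eqP; rewrite eqn_leq le_de /=.
  by rewrite leqNgt; apply/negP => lt_i; apply: no_lt; exists i.
rewrite (bigD1 i) //= [X in (_ < X)%N](bigD1 i) //= -addSn leq_add //.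
by rewrite leq_sum // => k _; exact: le_de.
Qed.

Lemma exists_minimal_exp N (P : ('I_N -> nat) -> Prop) e : P e ->
  exists2 d, exp_le d e & P d /\ forall g, exp_le g d -> P g -> g =1 d.
Proof.
move: {2}(\sum_i e i)%N (leqnn (\sum_i e i)) => k.
elim: k e => [|k IHk] e le_ek Pe.
  exists e; first by apply/forallP.
  split=> // g le_ge Pg; apply: NNPP => ne_ge.
  by have := sum_exp_lt le_ge ne_ge; rewrite ltnNge (leq_trans le_ek).
case: (classic (exists g, [/\ exp_le g e, P g & ~ g =1 e])) => [[g [le_ge Pg ne_ge]]|].
  have [d le_dg minPd] := IHk g (leq_trans (sum_exp_lt le_ge ne_ge) le_ek) Pg.
  by exists d => //; exact: exp_le_trans le_dg le_ge.
move=> no_smaller; exists e; first by apply/forallP.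
split=> // g le_ge Pg; apply: NNPP => ne_ge; apply: no_smaller; by exists g.
Qed.

Fixpoint mcoef (R : comNzRingType) (N : nat) : mpoly R N -> ('I_N -> nat) -> R :=
  match N return mpoly R N -> ('I_N -> nat) -> R with
  | 0 => fun f _ => f
  | N'.+1 => fun f e =>
      @mcoef R N' ((f : {poly mpoly R N'})`_(e ord_max))
        (fun i => e (widen_ord (leqnSn N') i))
  end.

Fixpoint mconst (R : comNzRingType) (N : nat) : R -> mpoly R N :=
  match N return R -> mpoly R N with
  | 0 => fun c => c
  | N'.+1 => fun c => ((@mconst R N' c)%:P : {poly mpoly R N'})
  end.

Section Monomials.
Variable R : comNzRingType.

Lemma eq_mcoef N (f : mpoly R N) (d e : 'I_N -> nat) : d =1 e -> mcoef f d = mcoef f e.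
Proof.
elim: N f d e => [//|N IHN] f d e eq_de /=.
by rewrite eq_de; apply: IHN => i; exact: eq_de.
Qed.

Lemma mcoef0 N (e : 'I_N -> nat) : mcoef (0 : mpoly R N) e = 0.
Proof. by elim: N e => [//|N IHN] e /=; rewrite coef0 IHN. Qed.

Lemma mcoefD N (f g : mpoly R N) (e : 'I_N -> nat) :
  mcoef (f + g) e = mcoef f e + mcoef g e.
Proof. by elim: N f g e => [//|N IHN] f g e /=; rewrite coefD IHN. Qed.

Lemma mcoef1 N (e : 'I_N -> nat) :
  mcoef (1 : mpoly R N) e = if [forall i, e i == 0%N] then 1 else 0.
Proof.
elim: N e => [|N IHN] e; first by case: forallP => // [[]] [].
rewrite /= coef1 forall_ord_recr; case: eqP => _ /=; first by rewrite andbT IHN.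
by rewrite andbF mcoef0.
Qed.

Lemma eq_mmon N (d e : 'I_N -> nat) : d =1 e -> mmon R d = mmon R e.
Proof. by move=> eq_de; apply: eq_bigr => i _; rewrite eq_de. Qed.

Lemma mmonD N (d e : 'I_N -> nat) :
  mmon R (fun i => d i + e i)%N = mmon R d * mmon R e.
Proof. by rewrite /mmon -big_split; apply: eq_bigr => i _; rewrite exprD. Qed.

Lemma mmon_subK N (d e : 'I_N -> nat) :
  exp_le d e -> mmon R e = mmon R (fun i => e i - d i)%N * mmon R d.
Proof.
by move=> /forallP le_de; rewrite -mmonD; apply: eq_mmon => i; rewrite subnK.
Qed.

Lemma mmon_recr N (e : 'I_N.+1 -> nat) :
  mmon R e = (mmon R (fun i => e (widen_ord (leqnSn N) i)))%:P * 'X^(e ord_max).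
Proof.
rewrite /mmon big_ord_recr /= eqxx rmorph_prod; congr (_ * _).
by apply: eq_bigr => i _ /=; rewrite ltn_eqF // rmorphXn.
Qed.

Lemma mcoef_mmonM N (d e : 'I_N -> nat) (f : mpoly R N) :
  mcoef (mmon R d * f) e = if exp_le d e then mcoef f (fun i => e i - d i)%N else 0.
Proof.
elim: N d e f => [|N IHN] d e f.
  by rewrite /mmon big_ord0 mul1r /exp_le; case: forallP => // [[]] [].
rewrite mmon_recr -mulrA /= coefCM coefXnM IHN /exp_le forall_ord_recr.
by case: ltnP => _; rewrite ?andbF ?mcoef0 ?andbT //; case: forallP.
Qed.

Lemma mcoef_mmon N (d e : 'I_N -> nat) :
  mcoef (mmon R d) e = if exp_le d e && [forall i, e i - d i == 0]%N then 1 else 0.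
Proof. by rewrite -[mmon R d]mulr1 mcoef_mmonM mcoef1; case: exp_le. Qed.

Lemma mcoef_mmon_id N (d : 'I_N -> nat) : mcoef (mmon R d) d = 1.
Proof.
rewrite mcoef_mmon; case: ifP => // /negP []; apply/andP.
by split; apply/forallP => i //; rewrite subnn.
Qed.

Lemma mcoef_mmon_neq0 N (d e : 'I_N -> nat) : mcoef (mmon R d) e != 0 -> d =1 e.
Proof.
rewrite mcoef_mmon; case: ifP => [/andP[/forallP le_de /forallP sub0] _ i|]; last first.
  by rewrite eqxx.
by apply/eqP; rewrite eqn_leq le_de -subn_eq0 sub0.
Qed.

Lemma mmon_inj N (d e : 'I_N -> nat) : mmon R d = mmon R e -> d =1 e.
Proof.
by move=> eq_de; apply: mcoef_mmon_neq0; rewrite eq_de mcoef_mmon_id oner_neq0.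
Qed.

Lemma rdvd_mmonP N (d e : 'I_N -> nat) : rdvd (mmon R d) (mmon R e) <-> exp_le d e.
Proof.
split=> [[h eq_e]|/mmon_subK eq_e]; last by exists (mmon R (fun i => e i - d i)%N).
have := mcoef_mmon_id e; rewrite eq_e mulrC mcoef_mmonM.
by case: exp_le => // /esym/eqP; rewrite oner_eq0.
Qed.

Definition exp_cons N (e : 'I_N -> nat) (k : nat) : 'I_N.+1 -> nat :=
  fun i => if unlift ord_max i is Some i' then e i' else k.

Lemma exp_cons_widen N (e : 'I_N -> nat) k i :
  exp_cons e k (widen_ord (leqnSn N) i) = e i.
Proof.
have -> : widen_ord (leqnSn N) i = lift ord_max i by apply: val_inj; rewrite /= [RHS]lift_max.
by rewrite /exp_cons liftK.
Qed.

Lemma exp_cons_max N (e : 'I_N -> nat) k : exp_cons e k ord_max = k.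
Proof. by rewrite /exp_cons unlift_none. Qed.

Lemma mpoly_ind N (Q : mpoly R N -> Prop) :
  Q 0 -> (forall a b, Q a -> Q b -> Q (a + b)) ->
  forall f, (forall e, mcoef f e != 0 -> Q (mconst N (mcoef f e) * mmon R e)) -> Q f.
Proof.
elim: N Q => [|N IHN] Q Q0 QD f Qterm.
  have [->//|f_neq0] := eqVneq f 0.
  by have := Qterm (fun _ => 0%N) f_neq0; rewrite /mmon big_ord0 mulr1.
have -> : f = \sum_(k < size (f : {poly mpoly R N})) ((f : {poly _})`_k)%:P * 'X^k.
  by rewrite -{1}[f]coefK poly_def; apply: eq_bigr => k _; rewrite mul_polyC.
apply: big_ind => // k _.
apply: (IHN (fun g => Q (g%:P * 'X^k))); first by rewrite polyC0 mul0r.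
  by move=> a b Qa Qb; rewrite polyCD mulrDl; exact: QD.
move=> e ek_neq0.
have coef_cons : mcoef f (exp_cons e k) = mcoef ((f : {poly _})`_k) e.
  by rewrite /= exp_cons_max; apply: eq_mcoef => i; exact: exp_cons_widen.
move: (Qterm (exp_cons e k)); rewrite coef_cons => /(_ ek_neq0).
by rewrite mmon_recr exp_cons_max (eq_mmon (exp_cons_widen e k)) /= polyCM mulrA.
Qed.

Lemma mmon_delta N (i0 : 'I_N) : mmon R (exp_delta i0) = mvar R N i0.
Proof.
rewrite /mmon (bigD1 i0) //= /exp_delta eqxx expr1 big1 ?mulr1 // => i /negPf->.
by rewrite expr0.
Qed.

End Monomials.

Section IdealGen.
Variables (T : comNzRingType) (S : T -> Prop).

Lemma ideal_gen0 : ideal_gen S 0.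
Proof. by exists [::]; rewrite big_nil. Qed.

Lemma ideal_genD a b : ideal_gen S a -> ideal_gen S b -> ideal_gen S (a + b).
Proof.
move=> [la [Sla ->]] [lb [Slb ->]]; exists (la ++ lb); rewrite big_cat; split=> // p.
by rewrite mem_cat => /orP[]; [exact: Sla|exact: Slb].
Qed.

Lemma ideal_genMl g a : ideal_gen S a -> ideal_gen S (g * a).
Proof.
move=> [l [Sl ->]]; exists (map (fun p => (g * p.1, p.2)) l); split.
  by move=> p /mapP[q lq ->]; exact: (Sl q lq).
by rewrite big_map mulr_sumr; apply: eq_bigr => p _; rewrite mulrA.
Qed.

Lemma ideal_gen_base u : S u -> ideal_gen S u.
Proof.
by move=> Su; exists [:: (1, u)]; rewrite big_seq1 mul1r; split=> // p /[1!inE] /eqP->.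
Qed.

End IdealGen.

Section MonomialGenerators.
Variables (R : comNzRingType) (N : nat) (S : mpoly R N -> Prop).
Hypothesis S_monomial : forall u, S u -> is_monomial u.

Lemma ideal_gen_monomialP f :
  ideal_gen S f <->
  forall e, mcoef f e != 0 -> exists2 d, S (mmon R d) & exp_le d e.
Proof.
split=> [[l [Sl ->]] e|divisible].
  elim: l Sl => [|p l IHl] Sl; first by rewrite big_nil mcoef0 eqxx.
  rewrite big_cons mcoefD.
  have [->|pe_neq0 _] := eqVneq (mcoef (p.1 * p.2) e) 0.
    by rewrite add0r; apply: IHl => q lq; apply: Sl; rewrite inE lq orbT.
  have Sp : S p.2 by apply: Sl; rewrite inE eqxx.
  have [d eq_p] := S_monomial Sp; exists d; first by rewrite -eq_p.
  by move: pe_neq0; rewrite eq_p mulrC mcoef_mmonM; case: exp_le; rewrite ?eqxx.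
apply: mpoly_ind; [exact: ideal_gen0 | exact: ideal_genD |].
move=> e /divisible[d Sd /mmon_subK->].
by rewrite mulrA; apply: ideal_genMl; exact: ideal_gen_base.
Qed.

Lemma ideal_gen_mmonP e :
  ideal_gen S (mmon R e) <-> exists2 d, S (mmon R d) & exp_le d e.
Proof.
rewrite ideal_gen_monomialP; split=> [|[d Sd le_de] e' /mcoef_mmon_neq0 eq_e].
  by apply; rewrite mcoef_mmon_id oner_neq0.
by exists d => //; apply/forallP => i; rewrite -eq_e; exact: (forallP le_de).
Qed.

End MonomialGenerators.

Section MonomialIdeal.
Variables (R : comNzRingType) (N : nat) (I : mpoly R N -> Prop).
Hypothesis monI : monomial_ideal I.

Lemma monomial_idealP f : I f <-> forall e, mcoef f e != 0 -> I (mmon R e).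
Proof.
have [S [S_monomial memI]] := monI; rewrite memI ideal_gen_monomialP //.
by split=> divisible e /divisible; rewrite memI ideal_gen_mmonP.
Qed.

Lemma monomial_ideal0 : I 0.
Proof. by have [S [_ ->]] := monI; exact: ideal_gen0. Qed.

Lemma monomial_idealMl g f : I f -> I (g * f).
Proof. by have [S [_ memI]] := monI; rewrite !memI; exact: ideal_genMl. Qed.

Lemma monomial_ideal_exp_le d e : I (mmon R d) -> exp_le d e -> I (mmon R e).
Proof. by move=> Id /mmon_subK->; exact: monomial_idealMl. Qed.

Lemma mingens_exp_le d e :
  in_mingens I (mmon R d) -> I (mmon R e) -> exp_le e d -> e =1 d.
Proof.
by move=> [_ [_ minI]] Ie le_ed; apply: mmon_inj; apply: minI; [exists e | | apply/rdvd_mmonP].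
Qed.

Lemma exists_mingens_exp_le e :
  I (mmon R e) -> exists2 d, exp_le d e & in_mingens I (mmon R d).
Proof.
move=> Ie; have [d le_de [Id minId]] := @exists_minimal_exp N (fun d => I (mmon R d)) e Ie.
exists d => //; split; first by exists d.
split=> // _ [g ->] Ig /rdvd_mmonP le_gd; exact/eq_mmon/minId.
Qed.

End MonomialIdeal.

Section XYVariables.
Variables (R : comNzRingType) (n m : nat).

Definition xgen (g : mpoly R (n + m)) : Prop := exists j : 'I_n, g = @xv R n m j.

Definition yexp (b : 'I_m -> nat) : 'I_(n + m) -> nat :=
  fun i => if split i is inr k then b k else 0%N.

Lemma yexp_lshift b (j : 'I_n) : yexp b (lshift m j) = 0%N.
Proof. by rewrite /yexp (unsplitK (inl _ j)). Qed.

Lemma yexp_rshift b (k : 'I_m) : yexp b (rshift n k) = b k.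
Proof. by rewrite /yexp (unsplitK (inr _ k)). Qed.

Lemma xv_mmon (j : 'I_n) : @xv R n m j = mmon R (exp_delta (lshift m j)).
Proof. by rewrite mmon_delta. Qed.

Lemma ymon_mmon b : @ymon R n m b = mmon R (yexp b).
Proof.
rewrite /mmon big_split_ord /= big1 ?mul1r => [|j _]; last by rewrite yexp_lshift.
by apply: eq_bigr => k _; rewrite yexp_rshift.
Qed.

Lemma mmon_yonly (e : 'I_(n + m) -> nat) : (forall j, e (lshift m j) = 0%N) ->
  mmon R e = @ymon R n m (fun k => e (rshift n k)).
Proof.
move=> e_x0; rewrite ymon_mmon; apply: eq_mmon => i.
by case: (split_ordP i) => [j ->|k ->]; rewrite ?yexp_lshift ?yexp_rshift.
Qed.

Lemma xgen_monomial g : xgen g -> is_monomial g.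
Proof. by move=> [j ->]; exists (exp_delta (lshift m j)); exact: xv_mmon. Qed.

Lemma xideal_mmonP e :
  ideal_gen xgen (mmon R e) <-> exists j : 'I_n, (0 < e (lshift m j))%N.
Proof.
rewrite (ideal_gen_mmonP xgen_monomial); split=> [[d [j]] | [j e_j]].
  rewrite xv_mmon => /mmon_inj eq_d /forallP le_de; exists j; rewrite -exp_le_delta.
  by apply/forallP => i; rewrite -eq_d.
by exists (exp_delta (lshift m j)); [exists j; rewrite xv_mmon | rewrite exp_le_delta].
Qed.

Lemma xideal_mcoef a e : ideal_gen xgen a -> mcoef a e != 0 ->
  exists j : 'I_n, (0 < e (lshift m j))%N.
Proof.
move=> /(ideal_gen_monomialP xgen_monomial) /[apply] -[d xd /mmon_subK eq_e].
by apply/xideal_mmonP; rewrite eq_e; apply: ideal_genMl; exact: ideal_gen_base.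
Qed.

End XYVariables.

Section ColonCondition.
Variables (K : fieldType) (n m : nat) (hn : (0 < n)%N).
Variables (I : mpoly K (n + m) -> Prop) (monI : monomial_ideal I).

Local Notation x0 := (lshift m (Ordinal hn)).
Local Notation x1 := (@xv K n m (Ordinal hn)).

Lemma mingens_x1_form :
  (forall f, I (x1 * f) -> ideal_gen (@xgen K n m) f -> I f) ->
  forall u, in_mingens I u -> rdvd x1 u ->
  exists b, u = x1 * @ymon K n m b /\ forall j, I (@xv K n m j * @ymon K n m b).
Proof.
move=> colonI u Gu x1_dvd_u; have [[d eq_u] [Iu _]] := Gu.
rewrite eq_u in Gu Iu x1_dvd_u *.
have le_x0_d : exp_le (exp_delta x0) d by move: x1_dvd_u; rewrite xv_mmon => /rdvd_mmonP.
pose d' i := (d i - exp_delta x0 i)%N.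
have eq_d : mmon K d = x1 * mmon K d' by rewrite xv_mmon mulrC -mmon_subK.
have d'_yonly j : d' (lshift m j) = 0%N.
  apply/eqP; rewrite -leqn0 leqNgt; apply/negP => d'_j.
  have Id' : I (mmon K d').
    by apply: colonI; [rewrite -eq_d | apply/xideal_mmonP; exists j].
  have le_d'd : exp_le d' d by apply/forallP => i; exact: leq_subr.
  move: (mingens_exp_le Gu Id' le_d'd x0) le_x0_d.
  by rewrite exp_le_delta /d' /exp_delta eqxx; case: (d x0) => // k; rewrite subSS subn0 => /n_Sn.
have eq_d' := @mmon_yonly K n m d' d'_yonly.
exists (fun k => d' (rshift n k)); split; first by rewrite eq_d eq_d'.
move=> j; apply: colonI.
  by rewrite mulrCA -eq_d' -eq_d; exact: monomial_idealMl.
by rewrite mulrC; apply: ideal_genMl; apply: ideal_gen_base; exists j.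
Qed.

Lemma colon_cap_sub :
  (forall u, in_mingens I u -> rdvd x1 u ->
     exists b, u = x1 * @ymon K n m b /\ forall j, I (@xv K n m j * @ymon K n m b)) ->
  forall a g, I (x1 * (a + g)) -> ideal_gen (@xgen K n m) a -> I g -> I (a + g).
Proof.
move=> x1_form a g Ix1f xa Ig; apply/monomial_idealP => // e f_e.
pose e1 i := (e i + exp_delta x0 i)%N.
have Ie1 : I (mmon K e1).
  move/(monomial_idealP monI): Ix1f; apply.
  rewrite xv_mmon mcoef_mmonM.
  have -> : exp_le (exp_delta x0) e1 by apply/forallP => i; exact: leq_addl.
  by rewrite (eq_mcoef _ (e := e)) // => i; rewrite addnK.
have [d le_de1 Gd] := exists_mingens_exp_le Ie1.
have Id : I (mmon K d) by case: Gd => _ [].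
have [le_de|nle_de] := boolP (exp_le d e); first exact: monomial_ideal_exp_le le_de.
have d_x0 := exp_le_add_delta le_de1 nle_de.
have [b [eq_d Ixb]] : exists b, mmon K d = x1 * @ymon K n m b /\
    forall j, I (@xv K n m j * @ymon K n m b).
  by apply: x1_form => //; rewrite xv_mmon; apply/rdvd_mmonP; rewrite exp_le_delta.
move: f_e; rewrite mcoefD; have [-> | a_e _] := eqVneq (mcoef a e) 0.
  by rewrite add0r => g_e; exact: (monomial_idealP monI g).1 Ig e g_e.
have [j e_j] := xideal_mcoef xa a_e.
move: (Ixb j); rewrite xv_mmon ymon_mmon -mmonD => /(monomial_ideal_exp_le monI); apply.
move: eq_d; rewrite xv_mmon ymon_mmon -mmonD => /mmon_inj eq_d.
apply/forallP => i; case: (split_ordP i) => [j' ->|k ->].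
  by rewrite yexp_lshift addn0 /exp_delta eq_lshift; case: eqP => [->|].
move: (forallP le_de1 (rshift n k)).
by rewrite eq_d /e1 /exp_delta !eq_rlshift !yexp_rshift add0n addn0.
Qed.

End ColonCondition.

Theorem lemma1p8 (K : fieldType) (n m : nat) (hn : (0 < n)%N)
  (I : mpoly K (n + m) -> Prop) (hI : monomial_ideal I) :
  let x1 := @xv K n m (Ordinal hn) in
  (* (a): (I : x_1) ∩ (mT + I) = I, where m = (x_1, ..., x_n) *)
  (forall f : mpoly K (n + m),
      (I (x1 * f) /\
       exists a b, f = a + b /\ ideal_gen (fun g => exists j : 'I_n, g = @xv K n m j) a
                   /\ I b)
      <-> I f)
  <->
  (* (b) *)
  (forall u : mpoly K (n + m), in_mingens I u -> rdvd x1 u ->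
      exists b : 'I_m -> nat, u = x1 * @ymon K n m b /\
        forall j : 'I_n, I (@xv K n m j * @ymon K n m b)).
Proof.
move=> x1; split=> [colonI | x1_form f].
  apply: mingens_x1_form => // f Ix1f xf; apply/colonI; split=> //.
  by exists f, 0; rewrite addr0; split=> //; split=> //; exact: monomial_ideal0.
split=> [[Ix1f [a [g [eq_f [xa Ig]]]]] | If].
  by rewrite eq_f in Ix1f *; exact: (colon_cap_sub hI x1_form).
split; first exact: monomial_idealMl.
by exists 0, f; rewrite add0r; split=> //; split=> //; exact: ideal_gen0.
Qed.
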